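(* Let $M,N$ be locally free $\widehat H$-modules with $\operatorname{Ext}^1_{\widehat H}(M,N)=0$. Then the natural map $\mathbb{F}\otimes_{\mathbb{F}[[\epsilon]]}\operatorname{Hom}_{\widehat H}(M,N)\to\operatorname{Hom}_H(\operatorname{Red}(M),\operatorname{Red}(N))$ is an isomorphism of $\mathbb{F}$-vector spaces.
   Context: Setup for $H$. Let $I=\{1,\dots,n\}$ and let $C=(c_{ij})\in\mathbb{Z}^{I\times I}$ be a symmetrizable generalized Cartan matrix with symmetrizer $D=\operatorname{diag}(c_1,\dots,c_n)$, $c_i\in\mathbb{Z}_{>0}$, $DC$ symmetric. An orientation $\Omega\subset I\times I$ contains, for each pair $i\ne j$ with $c_{ij}<0$, exactly one of $(i,j),(j,i)$, and nothing else; we assume $(i,j)\in\Omega\Rightarrow i<j$. For $c_{ij}<0$ set $g_{ij}=\gcd(c_{ij},c_{ji})$, $f_{ij}=-c_{ij}/g_{ij}$. For a field $\mathbb{F}$ let $H_i=\mathbb{F}[\varepsilon_i]/(\varepsilon_i^{c_i})$, $S=\prod_{i\in I}H_i$; for $(i,j)\in\Omega$ let ${}_iH'_j$ be the $H_i$-$H_j$-bimodule generated by $\alpha_{ij}$ subject to $\varepsilon_i^{f_{ji}}\alpha_{ij}=\alpha_{ij}\varepsilon_j^{f_{ij}}$, ${}_iH_j=({}_iH'_j)^{g_{ij}}$, and $H=T_S(\bigoplus_{(i,j)\in\Omega}{}_iH_j)$. Setup for $\widehat H$. Let $c=\operatorname{lcm}(c_i)$, $R=\mathbb{F}[[\epsilon]]$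 (with $\mathbb{F}=R/\epsilon R$); inside $\mathbb{F}((\epsilon^{1/c}))$ put $\epsilon_i=\epsilon^{1/c_i}$. Let $\widehat S=\prod_i\mathbb{F}[[\epsilon_i]]$, ${}_i\widehat H_j=(\mathbb{F}[[\epsilon_i,\epsilon_j]])^{g_{ij}}$, $\widehat H=T_{\widehat S}(\bigoplus_{(i,j)\in\Omega}{}_i\widehat H_j)$, an $R$-algebra via $\epsilon\mapsto(\epsilon_i^{c_i})_i$; $\widehat H/\epsilon\widehat H\cong H$ and $\operatorname{Red}(M)=H\otimes_{\widehat H}M=M/\epsilon M$. An $\widehat H$-module is locally free if each $e_iM$ is free over $\mathbb{F}[[\epsilon_i]]$. *)

From HB Require Import structures.
From mathcomp Require Import all_boot all_order all_algebra.
Set Implicit Arguments. Unset Strict Implicit. Unset Printing Implicit Defensive.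
Import Order.TTheory GRing.Theory Num.Theory.
Local Open Scope ring_scope.

Definition series (F : fieldType) := nat -> F.

Section Series.
Variable F : fieldType.
Definition ps_zero : series F := fun _ => 0.
Definition ps_one : series F := fun k => (k == 0%N)%:R.
Definition ps_add (a b : series F) : series F := fun k => a k + b k.
Definition ps_mul (a b : series F) : series F :=
  fun k => \sum_(i < k.+1) a i * b (k - i)%N.
Definition ps_X (e : nat) : series F := fun k => (k == e)%:R.
(* substitution a(t) |-> a(t^e)  (used with e > 0) *)
Definition ps_subst (a : series F) (e : nat) : series F :=
  fun k => if (e %| k)%N then a (k %/ e)%N else 0.
End Series.

Record psmod (F : fieldType) := PSMod {
  ps_car :> zmodType;
  ps_act : series F -> ps_car -> ps_car;
  ps_act_addl : forall a b v, ps_act (ps_add a b) v = ps_act a v + ps_act b v;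
  ps_act_addr : forall a v w, ps_act a (v + w) = ps_act a v + ps_act a w;
  ps_act_mul : forall a b v, ps_act (ps_mul a b) v = ps_act a (ps_act b v);
  ps_act_one : forall v, ps_act (ps_one F) v = v
}.
Arguments ps_act {F} _ _ _.

Definition ps_free (F : fieldType) (V : psmod F) : Prop :=
  exists (B : eqType) (b : B -> V),
    (forall v : V, exists (s : seq B) (a : B -> series F),
        v = \sum_(x <- s) ps_act V (a x) (b x)) /\
    (forall (s : seq B) (a : B -> series F), uniq s ->
        \sum_(x <- s) ps_act V (a x) (b x) = 0 ->
        forall x, x \in s -> a x = ps_zero F).

Definition is_gcm (n : nat) (C : 'M[int]_n) : Prop :=
  (forall i, C i i = 2) /\
  (forall i j, i != j -> C i j <= 0) /\
  (forall i j, (C i j == 0) = (C j i == 0)).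

Definition is_symmetrizer (n : nat) (C : 'M[int]_n) (c : 'I_n -> nat) : Prop :=
  (forall i, (0 < c i)%N) /\
  (forall i j, (c i)%:Z * C i j = (c j)%:Z * C j i).

Definition is_orientation (n : nat) (C : 'M[int]_n) (Om : rel 'I_n) : Prop :=
  (forall i j, Om i j -> C i j < 0) /\
  (forall i j, i != j -> C i j < 0 -> Om i j (+) Om j i) /\
  (forall i j, Om i j -> (i < j)%N).

Definition gC (n : nat) (C : 'M[int]_n) (i j : 'I_n) : nat :=
  gcdn `|C i j|%N `|C j i|%N.
Definition fC (n : nat) (C : 'M[int]_n) (i j : 'I_n) : nat :=
  (`|C i j|%N %/ gC C i j)%N.
(* number of arrow components i <- j : g_ij if (i,j) in Omega, 0 otherwise *)
Definition garr (n : nat) (C : 'M[int]_n) (Om : rel 'I_n) (i j : 'I_n) : nat :=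
  if Om i j then gC C i j else 0%N.

(* Modules over \hat H, described as representations of the species:         *)
(*  - at each vertex i an F[[eps_i]]-module M_i (eps_i is the variable t);   *)
(*  - for (i,j) in Omega and k < g_ij a map M_j -> M_i which is linear over  *)
(*    F[[eps^{1/d}]], acting on M_j via eps_j^{f_ij} and on M_i via          *)
(*    eps_i^{f_ji}, i.e. phi(a(eps_j^{f_ij}) v) = a(eps_i^{f_ji}) phi(v).    *)
Record hrep (F : fieldType) (n : nat) (C : 'M[int]_n) (Om : rel 'I_n) := HRep {
  hv : 'I_n -> psmod F;
  harr : forall i j : 'I_n, 'I_(garr C Om i j) -> hv j -> hv i;
  harr_add : forall (i j : 'I_n) k (v w : hv j), @harr i j k (v + w) = @harr i j k v + @harr i j k w;
  harr_semilin : forall (i j : 'I_n) k a (v : hv j),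
      @harr i j k (ps_act (hv j) (ps_subst a (fC C i j)) v) =
      ps_act (hv i) (ps_subst a (fC C j i)) (@harr i j k v)
}.
Arguments harr {F n C Om} _ {i j} _ _.
Arguments hv {F n C Om} _ _.

Record hhom (F : fieldType) (n : nat) (C : 'M[int]_n) (Om : rel 'I_n)
    (M N : hrep F C Om) := HHom {
  hmap : forall i, hv M i -> hv N i;
  hmap_add : forall i (v w : hv M i), @hmap i (v + w) = @hmap i v + @hmap i w;
  hmap_act : forall i a (v : hv M i),
      @hmap i (ps_act (hv M i) a v) = ps_act (hv N i) a (@hmap i v);
  hmap_arr : forall i j k (v : hv M j), @hmap i (harr M k v) = harr N k (@hmap j v)
}.
Arguments hmap {F n C Om M N} _ _ _.

Definition locally_free (F : fieldType) (n : nat) (C : 'M[int]_n) (Om : rel 'I_n)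
    (M : hrep F C Om) : Prop :=
  forall i, ps_free (hv M i).

(* Ext^1(M, N) = 0 (Yoneda): every short exact sequence 0 -> N -> E -> M -> 0
   of \hat H-modules splits. *)
Definition ext1_zero (F : fieldType) (n : nat) (C : 'M[int]_n) (Om : rel 'I_n)
    (M N : hrep F C Om) : Prop :=
  forall (E : hrep F C Om) (u : hhom N E) (p : hhom E M),
    (forall i, injective (hmap u i)) ->
    (forall i (y : hv M i), exists x, hmap p i x = y) ->
    (forall i (x : hv E i), hmap p i x = 0 <-> exists y, x = hmap u i y) ->
    exists s : hhom M E, forall i (x : hv M i), hmap p i (hmap s i x) = x.

(* eps = eps_i^{c_i} acting on e_i M;  x \in eps (e_i M) *)
Definition eps_act (F : fieldType) (n : nat) (C : 'M[int]_n) (Om : rel 'I_n)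
    (c : 'I_n -> nat) (M : hrep F C Om) (i : 'I_n) (v : hv M i) : hv M i :=
  ps_act (hv M i) (ps_X F (c i)) v.
Definition in_eps (F : fieldType) (n : nat) (C : 'M[int]_n) (Om : rel 'I_n)
    (c : 'I_n -> nat) (M : hrep F C Om) (i : 'I_n) (x : hv M i) : Prop :=
  exists y, x = eps_act c y.

(* H-module homomorphisms Red(M) -> Red(N), Red(X) = X / eps X, given through
   representatives: a family of maps phi_i : e_i M -> e_i N which is, modulo
   eps N, additive, H_i-linear (F[[eps_i]]/(eps) = H_i), sends eps M into
   eps N, and commutes with the arrows.  Two such families define the same
   homomorphism iff they agree modulo eps N. *)
Definition red_hom (F : fieldType) (n : nat) (C : 'M[int]_n) (Om : rel 'I_n)
    (c : 'I_n -> nat) (M N : hrep F C Om) (phi : forall i, hv M i -> hv N i) : Prop :=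
  (forall i (v w : hv M i), in_eps c (phi i (v + w) - phi i v - phi i w)) /\
  (forall i a (v : hv M i),
      in_eps c (phi i (ps_act (hv M i) a v) - ps_act (hv N i) a (phi i v))) /\
  (forall i (v : hv M i), in_eps c v -> in_eps c (phi i v)) /\
  (forall i j k (v : hv M j), in_eps c (phi i (harr M k v) - harr N k (phi j v))).

From HB Require Import structures.
From mathcomp Require Import all_boot all_order all_algebra.
From mathcomp Require Import boolp.
Set Implicit Arguments. Unset Strict Implicit. Unset Printing Implicit Defensive.
Import GRing.Theory Num.Theory.
Local Open Scope ring_scope.

(* Injectivity: if h(M) lies in eps N then h = eps h' for a homomorphism h',
   because eps acts injectively on each free F[[eps_i]]-module e_i N.
   Surjectivity: a homomorphism Red M -> Red N, given by representatives phi,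
   defines the graph modulo eps, E = {(x, y) in M (+) N | y = phi x mod eps N},
   an extension 0 -> N --eps--> E -> M -> 0.  As Ext^1(M, N) = 0 it splits, and
   the N-component of a splitting is a homomorphism lifting phi. *)

Section PowerSeries.
Variable F : fieldType.

Lemma ps_mulC (a b : series F) : ps_mul a b = ps_mul b a.
Proof.
apply: funext => k; rewrite /ps_mul (reindex_inj rev_ord_inj) /=.
by apply: eq_bigr => i _; rewrite mulrC subKn // -ltnS.
Qed.

Lemma ps_mulX e (a : series F) k :
  ps_mul (ps_X F e) a k = if (e <= k)%N then a (k - e)%N else 0.
Proof.
rewrite /ps_mul /ps_X; case: ifP => [le_ek|gt_ek].
  rewrite (bigD1 (Ordinal (le_ek : e < k.+1)%N)) //= eqxx mul1r big1 ?addr0 // => i.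
  by rewrite -val_eqE /= => /negbTE ->; rewrite mul0r.
apply: big1 => i _; case: eqP => [ie|]; last by rewrite mul0r.
by move: (ltn_ord i); rewrite ie ltnS gt_ek.
Qed.

Lemma ps_mulX_eq0 e (a : series F) : ps_mul (ps_X F e) a = ps_zero F -> a = ps_zero F.
Proof.
move=> Xa0; apply: funext => k.
by have := congr1 (fun s => s (k + e)%N) Xa0; rewrite ps_mulX leq_addl addnK.
Qed.

Lemma ps_substX e f : (0 < f)%N -> ps_subst (ps_X F e) f = ps_X F (e * f).
Proof.
move=> f_gt0; apply: funext => k; rewrite /ps_subst /ps_X.
case: ifP => [f_dvd_k|f_ndvd_k]; first by rewrite -(eqn_pmul2r f_gt0) divnK.
by case: eqP => // k_ef; rewrite k_ef dvdn_mull in f_ndvd_k.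
Qed.

End PowerSeries.

Section PsModule.
Variables (F : fieldType) (V : psmod F).

Lemma ps_act_zmod_morphism a : zmod_morphism (ps_act V a).
Proof. by move=> v w; apply: (addIr (ps_act V a w)); rewrite -ps_act_addr !subrK. Qed.

HB.instance Definition _ a :=
  GRing.isZmodMorphism.Build V V (ps_act V a) (ps_act_zmod_morphism a).

Lemma ps_act_zero v : ps_act V (ps_zero F) v = 0.
Proof.
have zz : ps_add (ps_zero F) (ps_zero F) = ps_zero F.
  by apply: funext => k; rewrite /ps_add /ps_zero addr0.
by apply: (addIr (ps_act V (ps_zero F) v)); rewrite -ps_act_addl zz add0r.
Qed.

Lemma ps_act_comm a b v : ps_act V a (ps_act V b v) = ps_act V b (ps_act V a v).
Proof. by rewrite -!ps_act_mul ps_mulC. Qed.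

Lemma ps_free_uniq_span : ps_free V ->
  exists (B : eqType) (b : B -> V),
    (forall v : V, exists (s : seq B) (a : B -> series F),
        uniq s /\ v = \sum_(x <- s) ps_act V (a x) (b x)) /\
    (forall (s : seq B) (a : B -> series F), uniq s ->
        \sum_(x <- s) ps_act V (a x) (b x) = 0 ->
        forall x, x \in s -> a x = ps_zero F).
Proof.
case=> B [b [span indep]]; exists B, b; split=> // v.
have [s [a ->]] := span v.
pose a' x := iter (count_mem x s) (ps_add (a x)) (ps_zero F).
exists (undup s), a'; split; first exact: undup_uniq.
rewrite -big_undup_iterop_count; apply: eq_bigr => x _.
rewrite Monoid.iteropE /a'; elim: (count_mem x s) => [|m IHm] /=.
  by rewrite ps_act_zero.
by rewrite ps_act_addl IHm.
Qed.

Lemma ps_free_actX_inj e : ps_free V -> injective (ps_act V (ps_X F e)).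
Proof.
move=> /ps_free_uniq_span [B [b [span indep]]] y1 y2 eq_y.
apply/subr0_eq.
have [s [a [uniq_s y12E]]] := span (y1 - y2).
have X_y12 : \sum_(x <- s) ps_act V (ps_mul (ps_X F e) (a x)) (b x) = 0.
  transitivity (ps_act V (ps_X F e) (y1 - y2)).
    by rewrite y12E raddf_sum; apply: eq_bigr => x _; rewrite ps_act_mul.
  by apply/eqP; rewrite raddfB subr_eq0; apply/eqP.
rewrite y12E big_seq big1 // => x s_x.
by rewrite (ps_mulX_eq0 (indep _ _ uniq_s X_y12 x s_x)) ps_act_zero.
Qed.

End PsModule.

Section EpsMultiples.
Variables (F : fieldType) (V : psmod F) (e : nat).

Definition eps_mult : {pred V} := fun x => `[< exists y, x = ps_act V (ps_X F e) y >].

Lemma eps_multP x : reflect (exists y, x = ps_act V (ps_X F e) y) (x \in eps_mult).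
Proof. exact: asboolP. Qed.

Lemma eps_mult_actX y : ps_act V (ps_X F e) y \in eps_mult.
Proof. by apply/eps_multP; exists y. Qed.

Lemma eps_mult_zmod_closed : zmod_closed eps_mult.
Proof.
split=> [|_ _ /eps_multP[y ->] /eps_multP[z ->]]; last by rewrite -raddfB eps_mult_actX.
by rewrite -(raddf0 (ps_act V (ps_X F e))) eps_mult_actX.
Qed.

HB.instance Definition _ := GRing.isZmodClosed.Build V eps_mult eps_mult_zmod_closed.

Lemma eps_mult_act a x : x \in eps_mult -> ps_act V a x \in eps_mult.
Proof. by move=> /eps_multP[y ->]; rewrite ps_act_comm eps_mult_actX. Qed.

End EpsMultiples.
Arguments eps_mult {F} V e.

Lemma gcd_cofactors (A B x y : nat) : (0 < A)%N -> (x * A = y * B)%N ->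
  exists2 m, y = (m * (A %/ gcdn A B))%N & x = (m * (B %/ gcdn A B))%N.
Proof.
move=> A_gt0 xAyB; set g := gcdn A B; set A' := (A %/ g)%N; set B' := (B %/ g)%N.
have g_gt0 : (0 < g)%N by rewrite gcdn_gt0 A_gt0.
have AE : A = (A' * g)%N by rewrite divnK ?dvdn_gcdl.
have BE : B = (B' * g)%N by rewrite divnK ?dvdn_gcdr.
have A'_gt0 : (0 < A')%N by move: A_gt0; rewrite AE muln_gt0 => /andP[].
have coAB : coprime A' B'.
  by rewrite /coprime -(eqn_pmul2r g_gt0) mul1n muln_gcdl -AE -BE.
have xy' : (x * A' = y * B')%N.
  by apply/eqP; rewrite -(eqn_pmul2r g_gt0) -!mulnA -AE -BE xAyB.
have A'_dvd_y : (A' %| y)%N by rewrite -(Gauss_dvdl _ coAB) -xy' dvdn_mull.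
exists (y %/ A')%N; first by rewrite divnK.
by apply/eqP; rewrite -(eqn_pmul2r A'_gt0) xy' mulnAC divnK.
Qed.

Section CartanData.
Variables (F : fieldType) (n : nat) (C : 'M[int]_n) (c : 'I_n -> nat) (Om : rel 'I_n).
Hypotheses (HD : is_symmetrizer C c) (HOm : is_orientation C Om).

Lemma arrow_exponents i j : Om i j ->
  [/\ 0 < fC C i j, 0 < fC C j i & exists2 m, c j = m * fC C i j & c i = m * fC C j i]%N.
Proof.
move=> Om_ij; have [c_gt0 DC_sym] := HD.
have [Om_neg _] := HOm.
have Cij_neq0 : C i j != 0 by rewrite ltr0_neq0 ?Om_neg.
have Cij_gt0 : (0 < `|C i j|)%N by rewrite absz_gt0.
have cC : (c i * `|C i j| = c j * `|C j i|)%N.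
  by have := congr1 absz (DC_sym i j); rewrite !abszM !absz_nat.
have [m cjE ciE] := gcd_cofactors Cij_gt0 cC.
rewrite /fC /gC (gcdnC `|C j i|%N); split; last by exists m.
- by move: (c_gt0 j); rewrite cjE muln_gt0 => /andP[].
- by move: (c_gt0 i); rewrite ciE muln_gt0 => /andP[].
Qed.

Lemma harr_eps_act (X : hrep F C Om) i j (k : 'I_(garr C Om i j)) (y : hv X j) :
  harr X k (eps_act c y) = eps_act c (harr X k y).
Proof.
have [Om_ij|nOm_ij] := boolP (Om i j); last first.
  by exfalso; move: (nat_of_ord k) (ltn_ord k) => m; rewrite /garr (negbTE nOm_ij).
have [fij_gt0 fji_gt0 [m cjE ciE]] := arrow_exponents Om_ij.
by rewrite /eps_act cjE ciE -!ps_substX // harr_semilin.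
Qed.

End CartanData.

Section GraphModulo.
Variables (F : fieldType) (V W : psmod F) (f : V -> W) (e : nat).
Hypothesis f_add : forall v w, f (v + w) - f v - f w \in eps_mult W e.
Hypothesis f_act : forall a v, f (ps_act V a v) - ps_act W a (f v) \in eps_mult W e.

Lemma eps_mult_map0 : f 0 \in eps_mult W e.
Proof. by rewrite -rpredN -[- f 0]sub0r -(subrr (f 0)) -{1}[0]addr0 f_add. Qed.

Lemma eps_mult_mapB v w : f (v - w) - (f v - f w) \in eps_mult W e.
Proof. by rewrite -rpredN opprB addrAC -{1}(subrK w v) f_add. Qed.

Definition graph_mod : {pred V * W} := fun p => p.2 - f p.1 \in eps_mult W e.

Lemma graph_modE p : (p \in graph_mod) = (p.2 - f p.1 \in eps_mult W e).
Proof. by []. Qed.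

Lemma graph_mod_zmod_closed : zmod_closed graph_mod.
Proof.
split=> [|[x1 y1] [x2 y2]]; rewrite !graph_modE /=.
  by rewrite sub0r rpredN eps_mult_map0.
move=> g1 g2; rewrite -[y1 - y2](subrK (f x1 - f x2)) -addrA rpredD //.
  by rewrite !opprD !opprK addrACA rpredD // addrC -opprB rpredN.
by rewrite -rpredN opprB eps_mult_mapB.
Qed.

HB.instance Definition _ :=
  GRing.isZmodClosed.Build (V * W)%type graph_mod graph_mod_zmod_closed.

Inductive graph_elt := GraphElt p of p \in graph_mod.
Definition graph_val (u : graph_elt) : V * W := let: GraphElt p _ := u in p.
HB.instance Definition _ := [isSub for graph_val].
HB.instance Definition _ := [Choice of graph_elt by <:].
HB.instance Definition _ := [SubChoice_isSubZmodule of graph_elt by <:].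

Lemma graph_act_proof a (p : graph_elt) :
  (ps_act V a (val p).1, ps_act W a (val p).2) \in graph_mod.
Proof.
case: p => [[x y] /= gxy]; rewrite graph_modE /=.
rewrite -[ps_act W a y](subrK (ps_act W a (f x))) -raddfB -addrA rpredD //.
  exact: eps_mult_act.
by rewrite -rpredN opprB f_act.
Qed.

Definition graph_act a (p : graph_elt) : graph_elt := GraphElt (graph_act_proof a p).

Lemma graph_act_addl a b p : graph_act (ps_add a b) p = graph_act a p + graph_act b p.
Proof. by apply: val_inj; rewrite /= !ps_act_addl. Qed.
Lemma graph_act_addr a p q : graph_act a (p + q) = graph_act a p + graph_act a q.
Proof. by apply: val_inj; rewrite /= !ps_act_addr. Qed.
Lemma graph_act_mul a b p : graph_act (ps_mul a b) p = graph_act a (graph_act b p).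
Proof. by apply: val_inj; rewrite /= !ps_act_mul. Qed.
Lemma graph_act_one p : graph_act (ps_one F) p = p.
Proof. by apply: val_inj; case: p => [[x y] ?]; rewrite /= !ps_act_one. Qed.

Definition graph_psmod : psmod F :=
  PSMod graph_act_addl graph_act_addr graph_act_mul graph_act_one.

End GraphModulo.

Section HRepArrows.
Variables (F : fieldType) (n : nat) (C : 'M[int]_n) (Om : rel 'I_n) (X : hrep F C Om).

Lemma harr_zmod_morphism i j (k : 'I_(garr C Om i j)) : zmod_morphism (harr X k).
Proof. by move=> v w; apply: (addIr (harr X k w)); rewrite -harr_add !subrK. Qed.

HB.instance Definition _ i j k :=
  GRing.isZmodMorphism.Build (hv X j) (hv X i) (harr X k) (@harr_zmod_morphism i j k).

End HRepArrows.

Section ReductionGraph.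
Variables (F : fieldType) (n : nat) (C : 'M[int]_n) (c : 'I_n -> nat) (Om : rel 'I_n).
Hypotheses (HD : is_symmetrizer C c) (HOm : is_orientation C Om).
Variables (M N : hrep F C Om) (phi : forall i, hv M i -> hv N i).
Arguments phi : clear implicits.
Hypothesis Hphi : red_hom c phi.

Lemma red_hom_add i v w : phi i (v + w) - phi i v - phi i w \in eps_mult (hv N i) (c i).
Proof. by apply/eps_multP; case: Hphi => add _; apply: add. Qed.

Lemma red_hom_act i a v :
  phi i (ps_act (hv M i) a v) - ps_act (hv N i) a (phi i v) \in eps_mult (hv N i) (c i).
Proof. by apply/eps_multP; case: Hphi => _ [act _]; apply: act. Qed.

Lemma red_hom_arr i j (k : 'I_(garr C Om i j)) v :
  phi i (harr M k v) - harr N k (phi j v) \in eps_mult (hv N i) (c i).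
Proof. by apply/eps_multP; case: Hphi => _ [_ [_ arr]]; apply: arr. Qed.

Definition graph_hv i : psmod F := graph_psmod (@red_hom_add i) (@red_hom_act i).

Lemma graph_arr_proof i j (k : 'I_(garr C Om i j)) (p : graph_hv j) :
  (harr M k (val p).1, harr N k (val p).2) \in graph_mod (phi i) (c i).
Proof.
case: p => [[x y] /=]; rewrite !graph_modE /= => /eps_multP[z yE].
rewrite -[y](subrK (phi j x)) harr_add -addrA rpredD //.
  by rewrite yE harr_eps_act //; apply: eps_mult_actX.
by rewrite -rpredN opprB red_hom_arr.
Qed.

Definition graph_arr i j (k : 'I_(garr C Om i j)) (p : graph_hv j) : graph_hv i :=
  GraphElt (graph_arr_proof k p).

Lemma graph_arr_add i j (k : 'I_(garr C Om i j)) p q :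
  graph_arr k (p + q) = graph_arr k p + graph_arr k q.
Proof. by apply: val_inj; rewrite /= !harr_add. Qed.

Lemma graph_arr_semilin i j (k : 'I_(garr C Om i j)) a p :
  graph_arr k (ps_act (graph_hv j) (ps_subst a (fC C i j)) p) =
  ps_act (graph_hv i) (ps_subst a (fC C j i)) (graph_arr k p).
Proof. by apply: val_inj; rewrite /= !harr_semilin. Qed.

Definition graph_hrep : hrep F C Om := HRep graph_arr_add graph_arr_semilin.

Lemma graph_in_proof i (y : hv N i) : (0, eps_act c y) \in graph_mod (phi i) (c i).
Proof.
by rewrite graph_modE rpredB ?eps_mult_actX ?(eps_mult_map0 (@red_hom_add i)).
Qed.

Definition graph_in_map i (y : hv N i) : hv graph_hrep i := GraphElt (graph_in_proof y).

Lemma graph_in_add i (v w : hv N i) : graph_in_map (v + w) = graph_in_map v + graph_in_map w.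
Proof. by apply: val_inj; rewrite /= /eps_act ps_act_addr -[X in (X, _)](addr0 0). Qed.

Lemma graph_in_act i a (v : hv N i) :
  graph_in_map (ps_act (hv N i) a v) = ps_act (hv graph_hrep i) a (graph_in_map v).
Proof. by apply: val_inj; rewrite /= /eps_act raddf0 ps_act_comm. Qed.

Lemma graph_in_arr i j (k : 'I_(garr C Om i j)) (v : hv N j) :
  graph_in_map (harr N k v) = harr graph_hrep k (graph_in_map v).
Proof. by apply: val_inj; rewrite /= raddf0 harr_eps_act. Qed.

Definition graph_in : hhom N graph_hrep := HHom graph_in_add graph_in_act graph_in_arr.

Definition graph_out : hhom graph_hrep M :=
  @HHom _ _ _ _ graph_hrep M (fun i p => (val p).1)
    (fun _ _ _ => erefl) (fun _ _ _ => erefl) (fun _ _ _ _ => erefl).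

Lemma graph_in_inj : locally_free N -> forall i, injective (hmap graph_in i).
Proof. by move=> lfN i y1 y2 /(congr1 (fun p => (val p).2)); apply: ps_free_actX_inj. Qed.

Lemma graph_out_surj i (x : hv M i) : exists p, hmap graph_out i p = x.
Proof.
have gx : (x, phi i x) \in graph_mod (phi i) (c i) by rewrite graph_modE subrr rpred0.
by exists (GraphElt gx).
Qed.

Lemma graph_out_ker i (p : hv graph_hrep i) :
  hmap graph_out i p = 0 <-> exists y, p = hmap graph_in i y.
Proof.
split=> [|[y ->] //]; case: p => [[x y] gxy] /= x0.
have : y \in eps_mult (hv N i) (c i).
  move: gxy; rewrite graph_modE /= x0 => gy.
  by rewrite -(subrK (phi i 0) y) rpredD // (eps_mult_map0 (@red_hom_add i)).
by case/eps_multP=> z yE; exists z; apply: val_inj; rewrite /= x0 yE.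
Qed.

Lemma red_hom_lift : locally_free N -> ext1_zero M N ->
  exists h : hhom M N, forall i v, in_eps c (hmap h i v - phi i v).
Proof.
move=> lfN ext; have [s sK] := ext _ _ _ (graph_in_inj lfN) graph_out_surj graph_out_ker.
pose snd_s i v := (val (hmap s i v)).2.
exists (@HHom _ _ _ _ M N snd_s
  (fun i v w => congr1 (fun p => (val p).2) (hmap_add s v w))
  (fun i a v => congr1 (fun p => (val p).2) (hmap_act s a v))
  (fun i j k v => congr1 (fun p => (val p).2) (hmap_arr s k v))).
move=> i v; apply/eps_multP; have sv : (val (hmap s i v)).1 = v := sK i v.
by move: (valP (hmap s i v)); rewrite graph_modE sv.
Qed.

End ReductionGraph.

Lemma hhom_eps_div (F : fieldType) (n : nat) (C : 'M[int]_n) (c : 'I_n -> nat)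
    (Om : rel 'I_n) (HD : is_symmetrizer C c) (HOm : is_orientation C Om)
    (M N : hrep F C Om) (h : hhom M N) :
  locally_free N -> (forall i (v : hv M i), in_eps c (hmap h i v)) ->
  exists h' : hhom M N, forall i (v : hv M i), hmap h i v = eps_act c (hmap h' i v).
Proof.
move=> lfN h_eps; pose h' i v := projT1 (cid (h_eps i v)).
have h'E i v : hmap h i v = eps_act c (h' i v) := projT2 (cid (h_eps i v)).
have eps_inj i : injective (fun y : hv N i => eps_act c y) := ps_free_actX_inj (lfN i).
have h'_add i (v w : hv M i) : h' i (v + w) = h' i v + h' i w.
  by apply: eps_inj; rewrite /= -h'E hmap_add !h'E /eps_act ps_act_addr.
have h'_act i a (v : hv M i) : h' i (ps_act (hv M i) a v) = ps_act (hv N i) a (h' i v).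
  by apply: eps_inj; rewrite /= -h'E hmap_act h'E /eps_act ps_act_comm.
have h'_arr i j (k : 'I_(garr C Om i j)) v : h' i (harr M k v) = harr N k (h' j v).
  by apply: eps_inj; rewrite /= -h'E hmap_arr h'E -(harr_eps_act HD HOm).
by exists (HHom h'_add h'_act h'_arr).
Qed.

Theorem lemma5p11 (F : fieldType) (n : nat) (C : 'M[int]_n) (c : 'I_n -> nat)
    (Om : rel 'I_n)
    (HC : is_gcm C) (HD : is_symmetrizer C c) (HOm : is_orientation C Om)
    (M N : hrep F C Om) :
  locally_free M -> locally_free N -> ext1_zero M N ->
  (* surjectivity of  F (x)_{F[[eps]]} Hom(M,N) -> Hom_H(Red M, Red N) *)
  (forall phi : forall i, hv M i -> hv N i, red_hom c phi ->
     exists h : hhom M N, forall i (v : hv M i), in_eps c (hmap h i v - phi i v)) /\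
  (* injectivity: Red(h) = 0 iff h \in eps Hom(M,N) *)
  (forall h : hhom M N, (forall i (v : hv M i), in_eps c (hmap h i v)) ->
     exists h' : hhom M N, forall i (v : hv M i), hmap h i v = eps_act c (hmap h' i v)).
Proof.
move=> _ lfN ext; split=> [phi Hphi | h h_eps].
- exact: (red_hom_lift HD HOm Hphi lfN ext).
- exact: (hhom_eps_div HD HOm lfN h_eps).
Qed.
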